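(* Let $q$ be a power of the prime $p$, let $\alpha_1(x),\dots,\alpha_d(x),\beta_1(x),\dots,\beta_d(x)\in{\mathbb F}_q[x]$, and define $a\in{\mathbb F}_q[x]^{{\mathbb N}}$ by $a(n)=\beta_1(x)\alpha_1(x)^n+\cdots+\beta_d(x)\alpha_d(x)^n$. Suppose $k\ge2$ is such that $\deg\alpha_i(x)\le k$ and $\deg\beta_i(x)\le(p-1)k$ for all $i$. Then $\operatorname{comp}_p({\mathcal Z}(a))\le q^{d^2k^4p^4}$.
   Context: ${\mathbb N}=\{0,1,2,\dots\}$, ${\mathcal Z}(a)=\{n\in{\mathbb N}\mid a(n)=0\}$. For integers $k\ge1$, $j\ge0$ let $L^k_j:{\mathbb N}\to{\mathbb N}$, $L^k_j(n)=kn+j$. For $S\subseteq{\mathbb N}$ let ${\mathcal V}_S=\{(L^{p^r}_i)^{-1}(S)\mid r\in{\mathbb N},\ 0\le i<p^r\}$ (a set of subsets of ${\mathbb N}$), and $\operatorname{comp}_p(S)=|{\mathcal V}_S|$, the $p$-complexity of $S$. *)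

From HB Require Import structures.
From mathcomp Require Import all_boot all_order all_algebra all_field.
Set Implicit Arguments. Unset Strict Implicit. Unset Printing Implicit Defensive.
Import GRing.Theory.
Local Open Scope ring_scope.

Definition Lmap (k j : nat) (n : nat) : nat := (k * n + j)%N.

Definition zero_set (R : nzRingType) (a : nat -> R) : nat -> bool :=
  fun n => a n == 0.

Definition kernel_elem (p : nat) (S : nat -> bool) (r i : nat) : nat -> bool :=
  fun n => S (Lmap (p ^ r) i n).

(* comp_p(S) <= N, i.e. |V_S| <= N: the set V_S = {(L^{p^r}_i)^{-1}(S) | r, i < p^r}
   of subsets of N is covered by a list of at most N subsets of N
   (subsets are compared extensionally, i.e. as subsets). *)
Definition comp_le (p : nat) (S : nat -> bool) (N : nat) : Prop :=
  exists L : seq (nat -> bool),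
    (size L <= N)%N /\
    forall r i : nat, (i < p ^ r)%N ->
      exists2 j : nat, (j < size L)%N &
        forall n, nth (fun _ => false) L j n = kernel_elem p S r i n.

(* Encode a(n) = \sum_i P_i alpha_i^n by the matrix whose rows are the coefficient
   vectors of the P_i, all of degree < m = (p - 1) k + 1.  Over F_q of characteristic
   p every polynomial splits as f = \sum_(l < p) X^l f_l^p, f_l collecting the p-th
   roots of the coefficients of f of index = l mod p.  Applied to P_i alpha_i^j
   (j < p), whose degree is < p m, this gives
     a(p n + j) = \sum_(l < p) X^l b_l(n)^p
   with each b_l of the same shape, and a(p n + j) = 0 iff every b_l(n) = 0.  Hence
   each element of the p-kernel of Z(a) is the common zero set of finitely many such
   sequences.  That set only depends on the span of their coefficient matrices, a
   subspace of the (d m)-dimensional space of matrices, and so on a basis of it: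
   there are at most q^((d m)^2) <= q^(d^2 k^4 p^4) choices. *)

From HB Require Import structures.
From mathcomp Require Import all_boot all_order all_algebra all_field.
From mathcomp Require Import zify.
Import GRing.Theory.
Local Open Scope ring_scope.

Set Implicit Arguments.
Unset Strict Implicit.

Section Frobenius.

Variables (F : fieldType) (p : nat).
Hypothesis hc : p \in [pchar F].

Let p_gt0 : (0 < p)%N. Proof. exact/prime_gt0/(pcharf_prime hc). Qed.

Lemma expp_comp_Xn (g : {poly F}) :
  g ^+ p = map_poly (pFrobenius_aut hc) g \Po 'X^p.
Proof.
have hcp : p \in [pchar {poly F}] by rewrite pchar_poly.
elim/poly_ind: g => [|g c IH]; first by rewrite expr0n gtn_eqF // map_poly0 comp_poly0.
rewrite -[LHS](pFrobenius_autE hcp) rmorphD rmorphM /= !(pFrobenius_autE hcp) IH.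
rewrite rmorphD rmorphM /= map_polyX map_polyC /=.
by rewrite comp_polyD comp_polyM comp_polyX comp_polyC polyC_exp.
Qed.

Lemma coef_expp (g : {poly F}) s :
  (g ^+ p)`_s = if (p %| s)%N then g`_(s %/ p) ^+ p else 0.
Proof. by rewrite expp_comp_Xn coef_comp_poly_Xn // coef_map /= pFrobenius_autE. Qed.

Lemma coef_sum_Xn_expp (g : 'I_p -> {poly F}) s (l0 : 'I_p) :
  l0 = (s %% p)%N :> nat -> (\sum_(l < p) 'X^l * g l ^+ p)`_s = (g l0)`_(s %/ p) ^+ p.
Proof.
move=> def_l0; rewrite coef_sum (bigD1 l0) //= big1 ?addr0.
  rewrite coefXnM def_l0 ltnNge leq_mod /= coef_expp.
  have -> : (s - s %% p = s %/ p * p)%N by rewrite {1}(divn_eq s p) addnK.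
  by rewrite dvdn_mull // mulnK.
move=> l /eqP ne_l; rewrite coefXnM; case: ltnP => // le_l_s.
rewrite coef_expp; case: ifP => // /dvdnP [q def_q]; case: ne_l.
by apply: val_inj; rewrite /= def_l0 -(subnK le_l_s) def_q modnMDl modn_small.
Qed.

Lemma sum_Xn_expp_eq0 (g : 'I_p -> {poly F}) :
  (\sum_(l < p) 'X^l * g l ^+ p == 0) = [forall l, g l == 0].
Proof.
apply/eqP/forallP => [H l|H]; last first.
  by rewrite big1 // => l _; rewrite (eqP (H l)) expr0n gtn_eqF // mulr0.
apply/eqP/polyP => t; have := congr1 (fun q : {poly F} => q`_(p * t + l)) H.
rewrite (@coef_sum_Xn_expp _ _ l) /=; last by rewrite mulnC modnMDl modn_small.
rewrite coef0 => /eqP; rewrite expf_eq0 p_gt0 /= => /eqP.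
by rewrite mulnC divnMDl // divn_small // addn0 coef0.
Qed.

End Frobenius.

Section FrobeniusRoot.

Variables (F : finFieldType) (p : nat).
Hypothesis hc : p \in [pchar F].

Let p_gt0 : (0 < p)%N. Proof. exact/prime_gt0/(pcharf_prime hc). Qed.

Lemma expp_inj : injective (fun x : F => x ^+ p).
Proof. by move=> x y /=; rewrite -!(pFrobenius_autE hc); apply: fmorph_inj. Qed.

Definition frob_root : F -> F := invF expp_inj.

Lemma frob_rootK x : frob_root x ^+ p = x.
Proof. exact: (f_invF expp_inj). Qed.

Lemma frob_root0 : frob_root 0 = 0.
Proof. by apply: expp_inj; rewrite /= frob_rootK expr0n gtn_eqF. Qed.

Definition frob_part (f : {poly F}) (l : nat) : {poly F} :=
  \poly_(t < size f) frob_root f`_(p * t + l).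

Lemma frob_decomp (f : {poly F}) : f = \sum_(l < p) 'X^l * frob_part f l ^+ p.
Proof.
apply/polyP => s; rewrite (@coef_sum_Xn_expp _ _ hc _ _ (Ordinal (ltn_pmod s p_gt0))) //.
rewrite coef_poly /=; case: ltnP => [_|le_f_s]; first by rewrite frob_rootK mulnC -divn_eq.
by rewrite expr0n gtn_eqF // nth_default // (leq_trans le_f_s) ?leq_div.
Qed.

Lemma size_frob_part (f : {poly F}) l m : (size f <= p * m)%N -> (size (frob_part f l) <= m)%N.
Proof.
move=> le_f_pm; apply/leq_sizeP => t le_m_t; rewrite coef_poly; case: ifP => // _.
rewrite nth_default ?frob_root0 //; apply: leq_trans le_f_pm _.
by rewrite (leq_trans (leq_mul (leqnn p) le_m_t)) ?leq_addr.
Qed.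

Lemma sum_mul_expp_frob (I : finType) (f u : I -> {poly F}) :
  \sum_i f i * u i ^+ p = \sum_(l < p) 'X^l * (\sum_i frob_part (f i) l * u i) ^+ p.
Proof.
have hcp : p \in [pchar {poly F}] by rewrite pchar_poly.
transitivity (\sum_i \sum_(l < p) 'X^l * (frob_part (f i) l * u i) ^+ p).
  apply: eq_bigr => i _; rewrite {1}(frob_decomp (f i)) mulr_suml.
  by apply: eq_bigr => l _; rewrite exprMn mulrA.
rewrite exchange_big; apply: eq_bigr => l _ /=; rewrite -mulr_sumr; congr (_ * _).
by rewrite -(pFrobenius_autE hcp) rmorph_sum; apply: eq_bigr => i _; apply: pFrobenius_autE.
Qed.

End FrobeniusRoot.

Section SpanVanishing.

Variables (K : fieldType) (V : vectType K) (W : lmodType K) (f : {linear V -> W}).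

Lemma span_eq0 (X : seq V) v : all (fun x => f x == 0) X -> v \in <<X>>%VS -> f v = 0.
Proof.
move=> /allP X0 /(coord_span (X := in_tuple X)) ->.
rewrite linear_sum big1 // => i _; rewrite linearZ /= (eqP (X0 _ _)) ?scaler0 //.
exact: mem_nth.
Qed.

Lemma all_eq0_vbasis (X : seq V) :
  all (fun x => f x == 0) X = [forall t : 'I_(dim V), f (vbasis <<X>>)`_t == 0].
Proof.
apply/idP/forallP => [X0 t | B0].
  case: (ltnP t (\dim <<X>>)) => [lt_t | le_t]; last first.
    by rewrite nth_default ?size_tuple ?linear0.
  by apply/eqP/(span_eq0 X0)/vbasis_mem/mem_nth; rewrite size_tuple.
apply/allP => x Xx; apply/eqP/(span_eq0 (X := vbasis <<X>>)).
  apply/allP => b /(nthP 0) [t lt_t <-]; rewrite size_tuple in lt_t.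
  have lt_tV : (t < dim V)%N by rewrite (leq_trans lt_t) // -dimvf dimvS ?subvf.
  exact: (B0 (Ordinal lt_tV)).
by rewrite (span_basis (vbasisP _)) memv_span.
Qed.

End SpanVanishing.

Lemma comp_leW p S N N' : (N <= N')%N -> comp_le p S N -> comp_le p S N'.
Proof. by move=> le_N [L [le_L cover_L]]; exists L; split; first exact: leq_trans le_N. Qed.

Lemma comp_le_card (I : finType) (G : I -> nat -> bool) p S :
  (forall r i, (i < p ^ r)%N -> exists y, G y =1 kernel_elem p S r i) -> comp_le p S #|I|.
Proof.
move=> cover_G; exists [seq G y | y <- enum I]; split; first by rewrite size_map -cardE.
move=> r i /cover_G [y Gy]; have Iy : y \in enum I by rewrite mem_enum.
exists (index y (enum I)); first by rewrite size_map index_mem.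
by move=> n; rewrite (nth_map y) ?index_mem // nth_index.
Qed.

Lemma kernel_elem_closed (I : Type) (G : I -> nat -> bool) p :
  (forall x j, (j < p)%N -> exists y, forall n, G x (p * n + j)%N = G y n) ->
  forall r x i, (i < p ^ r)%N -> exists y, forall n, kernel_elem p (G x) r i n = G y n.
Proof.
move=> G_step; elim=> [|r IH] x i.
  rewrite expn0 ltnS leqn0 => /eqP ->; exists x => n.
  by rewrite /kernel_elem /Lmap expn0 mul1n addn0.
rewrite expnSr => lt_i.
have p_gt0 : (0 < p)%N by move: lt_i; case: (p) => //; rewrite muln0.
have [x1 Gx1] := G_step x (i %% p)%N (ltn_pmod i p_gt0).
have lt_ip : (i %/ p < p ^ r)%N by rewrite ltn_divLR.
have [y Gy] := IH x1 (i %/ p)%N lt_ip.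
(* p^(r+1) n + i = p (p^r n + i %/ p) + i %% p *)
exists y => n; rewrite -Gy /kernel_elem /Lmap -Gx1 {1}(divn_eq i p) expnSr.
congr (G x _); nia.
Qed.

Definition pow_sum (F : fieldType) d m (alpha : 'I_d -> {poly F}) n (b : 'M[F]_(d, m)) :
  {poly F} := \sum_i rVpoly (row i b) * alpha i ^+ n.

Fact pow_sum_is_semilinear (F : fieldType) d m (alpha : 'I_d -> {poly F}) n :
  semilinear (@pow_sum F d m alpha n).
Proof.
split=> [c b | b b']; rewrite /pow_sum ?scaler_sumr -?big_split; apply: eq_bigr => i _.
  by rewrite !linearZ /= scalerAl.
by rewrite !linearD /= mulrDl.
Qed.

HB.instance Definition _ (F : fieldType) d m (alpha : 'I_d -> {poly F}) n :=
  GRing.isSemilinear.Build F 'M[F]_(d, m) {poly F} _ (@pow_sum F d m alpha n)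
    (@pow_sum_is_semilinear F d m alpha n).

Definition common_zero (F : fieldType) d m (alpha : 'I_d -> {poly F})
    (X : seq 'M[F]_(d, m)) n :=
  all (fun b => pow_sum alpha n b == 0) X.

Section PowSumFrobenius.

Variables (F : finFieldType) (p : nat).
Hypothesis hc : p \in [pchar F].
Variables (d k : nat) (alpha : 'I_d -> {poly F}).
Hypothesis halpha : forall i, (size (alpha i) <= k.+1)%N.

Local Notation m := ((p - 1) * k).+1.
Local Notation M := 'M[F]_(d, m).

(* Row [i] is the [l]-th Frobenius part of [P_i * alpha_i ^+ j]; it fits in [m]
   coefficients since [deg (P_i * alpha_i ^+ j) < m + (p - 1) k <= p m]. *)
Definition frob_shift j l (b : M) : M :=
  \matrix_i poly_rV (frob_part hc (rVpoly (row i b) * alpha i ^+ j) l).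

Definition frob_shift_seq j (X : seq M) : seq M :=
  [seq frob_shift j l b | b : M <- X, l : 'I_p <- enum 'I_p].

Lemma size_rVpoly_mul_exp (b : M) i j :
  (j < p)%N -> (size (rVpoly (row i b) * alpha i ^+ j)%R <= p * m)%N.
Proof.
move=> lt_j_p; have le_b : (size (rVpoly (row i b)) <= m)%N := size_poly _ _.
have := size_polyMleq (rVpoly (row i b)) (alpha i ^+ j).
have := size_poly_exp_leq (alpha i) j; have := halpha i; nia.
Qed.

Lemma pow_sum_frob_shift (b : M) n j : (j < p)%N ->
  pow_sum alpha (p * n + j) b = \sum_(l < p) 'X^l * pow_sum alpha n (frob_shift j l b) ^+ p.
Proof.
move=> lt_j_p; rewrite /pow_sum.
transitivity (\sum_i (rVpoly (row i b) * alpha i ^+ j) * (alpha i ^+ n) ^+ p).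
  by apply: eq_bigr => i _; rewrite -exprM -mulrA -exprD (mulnC n p) addnC.
rewrite (sum_mul_expp_frob hc); apply: eq_bigr => l _; congr (_ * (_ ^+ _)).
apply: eq_bigr => i _; rewrite rowK poly_rV_K //.
exact/size_frob_part/size_rVpoly_mul_exp.
Qed.

Lemma common_zero_frob_shift (X : seq M) n j : (j < p)%N ->
  common_zero alpha X (p * n + j) = common_zero alpha (frob_shift_seq j X) n.
Proof.
move=> lt_j_p; apply/allP/all_allpairsP => [X0 b l Xb _ | X0 b Xb].
  by move: (X0 b Xb); rewrite pow_sum_frob_shift // (sum_Xn_expp_eq0 hc) => /forallP.
rewrite /= pow_sum_frob_shift // (sum_Xn_expp_eq0 hc).
by apply/forallP => l; apply: X0; rewrite ?mem_enum.
Qed.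

End PowSumFrobenius.

Lemma sq_dim_le (d k p : nat) : (0 < k)%N -> (0 < p)%N ->
  ((d * ((p - 1) * k).+1) ^ 2 <= d ^ 2 * k ^ 4 * p ^ 4)%N.
Proof.
move=> k_gt0 p_gt0.
have -> : (d ^ 2 * k ^ 4 * p ^ 4 = (d * (k * p) ^ 2) ^ 2)%N.
  by rewrite expnMn -expnM expnMn mulnA.
rewrite leq_sqr leq_mul2l; apply/orP; right.
have le_m_kp : (((p - 1) * k).+1 <= k * p)%N by rewrite mulnBl mul1n; nia.
by rewrite (leq_trans le_m_kp) // leq_pmulr // muln_gt0 k_gt0.
Qed.

Unset Implicit Arguments. Set Strict Implicit.

Theorem proposition6p5 (p : nat) (F : finFieldType)
  (hp : prime p) (hchar : p \in [pchar F])
  (d k : nat) (alpha beta : 'I_d -> {poly F})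
  (hk : (2 <= k)%N)
  (halpha : forall i, (size (alpha i) <= k.+1)%N)
  (hbeta : forall i, (size (beta i) <= (p - 1) * k + 1)%N) :
  comp_le p (zero_set (fun n : nat => \sum_(i < d) beta i * alpha i ^+ n))
    (#|F| ^ (d ^ 2 * k ^ 4 * p ^ 4))%N.
Proof.
set m := ((p - 1) * k).+1.
pose M := 'M[F]_(d, m).
pose b0 : M := \matrix_i poly_rV (beta i).
have zero_set_b0 n : zero_set (fun n => \sum_(i < d) beta i * alpha i ^+ n) n =
    common_zero alpha [:: b0] n.
  rewrite /zero_set /common_zero /= andbT; congr (_ == 0); apply: eq_bigr => i _.
  by rewrite rowK poly_rV_K // /m -addn1.
pose G (g : {ffun 'I_(dim M) -> M}) n := [forall t, pow_sum alpha n (g t) == 0].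
apply: comp_leW (comp_le_card (G := G) _).
  rewrite card_ffun card_mx card_ord dim_matrix -expnM.
  apply: leq_pexp2l; first exact/ltnW/card_finNzRing_gt1.
  by apply: sq_dim_le; [apply: leq_trans hk | apply: prime_gt0].
move=> r i lt_i.
have frob_step (X : seq M) j : (j < p)%N -> exists Y : seq M, forall n,
    common_zero alpha X (p * n + j) = common_zero alpha Y n.
  by move=> lt_j; exists (frob_shift_seq hchar alpha j X) => n; apply: common_zero_frob_shift.
have [X kerX] := kernel_elem_closed frob_step [:: b0] lt_i.
exists [ffun t : 'I_(dim M) => (vbasis <<X>>)`_t] => n.
rewrite /kernel_elem zero_set_b0 -/(kernel_elem p _ r i n) kerX /common_zero.
by rewrite (all_eq0_vbasis (pow_sum alpha n)); apply: eq_forallb => t; rewrite ffunE.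
Qed.
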